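(* There exists an absolute constant $\tau_0>1$ such that for every $\tau\in(1,\tau_0)$ there exists a compact set $K\subset\mathbb{R}$ with Newhouse thickness $\tau(K)=\tau$, having a unique largest bounded gap, such that $K$ contains no configuration of the form $\{x-t,\,x,\,x+t^2\}$ with $t>0$ and $x$ one of the two endpoints of the largest gap of $K$.
   Context: For a compact set $K\subset\mathbb{R}$, a gap of $K$ is a connected component of $\mathbb{R}\setminus K$. If $u$ is the right endpoint of a bounded gap $G$, the bridge at $u$ is the maximal interval $B=[u,v]$ such that every gap $G'$ of $K$ with $G'\subset B$ satisfies $|G'|\le|G|$; bridges at left endpoints of bounded gaps are defined symmetrically (maximal intervals $[v,u]$ with the same property). For such an endpoint $u$, set $\tau(K,u)=|B|/|G|$. The Newhouse thickness of $K$ is $\tau(K)=\inf_u\tau(K,u)$, the infimum over all endpoints $u$ of bounded gaps of $K$. *)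

From Stdlib Require Import Reals Lra.
From Stdlib Require Export Rtopology.
Open Scope R_scope.

(* (a,b) is a bounded gap of K: a bounded connected component of R \ K.
   For K compact (closed), these are exactly the open intervals (a,b) with
   a < b, a, b in K and (a,b) disjoint from K. *)
Definition is_bgap (K : R -> Prop) (a b : R) : Prop :=
  a < b /\ K a /\ K b /\ (forall x, a < x < b -> ~ K x).

(* Unbounded gaps (of infinite length) are handled by requiring the interval
   to lie in the convex hull of K (see bridge predicates below). *)
Definition meets_long_gap (K : R -> Prop) (L l r : R) : Prop :=
  exists c d, is_bgap K c d /\ d - c > L /\ exists x, c < x < d /\ l <= x <= r.

Definition right_bridge_ok (K : R -> Prop) (a b v : R) : Prop :=
  b <= v /\ (exists k, K k /\ v <= k) /\ ~ meets_long_gap K (b - a) b v.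

Definition left_bridge_ok (K : R -> Prop) (a b w : R) : Prop :=
  w <= a /\ (exists k, K k /\ k <= w) /\ ~ meets_long_gap K (b - a) w a.

Definition right_bridge (K : R -> Prop) (a b v : R) : Prop :=
  right_bridge_ok K a b v /\ forall v', right_bridge_ok K a b v' -> v' <= v.

Definition left_bridge (K : R -> Prop) (a b w : R) : Prop :=
  left_bridge_ok K a b w /\ forall w', left_bridge_ok K a b w' -> w <= w'.

Definition local_thickness_value (K : R -> Prop) (r : R) : Prop :=
  exists a b, is_bgap K a b /\
    ((exists v, right_bridge K a b v /\ r = (v - b) / (b - a)) \/
     (exists w, left_bridge K a b w /\ r = (a - w) / (b - a))).

Definition is_glb (E : R -> Prop) (m : R) : Prop :=
  (forall x, E x -> m <= x) /\ (forall m', (forall x, E x -> m' <= x) -> m' <= m).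

Definition newhouse_thickness (K : R -> Prop) (t : R) : Prop :=
  is_glb (local_thickness_value K) t.

Definition unique_largest_gap (K : R -> Prop) (a b : R) : Prop :=
  is_bgap K a b /\ forall c d, is_bgap K c d -> (c, d) <> (a, b) -> d - c < b - a.

From Stdlib Require Import Reals Lra.
Open Scope R_scope.

(* A union of three intervals suffices. In
   K = [-130,-15] u [-9,0] u [100, 100 + 100 tau] the largest gap is (0,100);
   the bridge at 100 has length 100 tau, while the other three bridges give
   the larger ratios 13/10, 3/2 and 115/6, so tau(K) = tau for tau < 6/5.
   At x = 0, x + t^2 in K forces 10 <= t < 15, which puts x - t into the gap
   (-15,-9); at x = 100, x - t in K forces t >= 100, so x + t^2 leaves K. *)

Lemma closed_set_union (A B : R -> Prop) :
  closed_set A -> closed_set B -> closed_set (union_domain A B).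
Proof.
  intros HA HB x Hx.
  assert (Hi : intersection_domain (complementary A) (complementary B) x)
    by (split; intro H; apply Hx; hnf; tauto).
  destruct (open_set_P3 _ _ HA HB x Hi) as [d Hd].
  exists d; intros y Hy [Hy' | Hy']; destruct (Hd y Hy) as [HnA HnB]; auto.
Qed.

Lemma closed_set_interval (a b : R) : closed_set (fun x => a <= x <= b).
Proof. apply compact_P2, compact_P3. Qed.

Lemma right_bridge_ratio_ge (K : R -> Prop) (a b v0 v r : R) :
  a < b -> right_bridge_ok K a b v0 -> r * (b - a) <= v0 - b ->
  right_bridge K a b v -> r <= (v - b) / (b - a).
Proof.
  intros Hab Hv0 Hr [_ Hmax].
  specialize (Hmax v0 Hv0).
  apply Rmult_le_reg_r with (b - a); [lra |].
  unfold Rdiv; rewrite Rmult_assoc, Rinv_l; lra.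
Qed.

Lemma left_bridge_ratio_ge (K : R -> Prop) (a b w0 w r : R) :
  a < b -> left_bridge_ok K a b w0 -> r * (b - a) <= a - w0 ->
  left_bridge K a b w -> r <= (a - w) / (b - a).
Proof.
  intros Hab Hw0 Hr [_ Hmax].
  specialize (Hmax w0 Hw0).
  apply Rmult_le_reg_r with (b - a); [lra |].
  unfold Rdiv; rewrite Rmult_assoc, Rinv_l; lra.
Qed.

Lemma right_bridge_max (K : R -> Prop) (a b M : R) :
  (forall k, K k -> k <= M) -> K M -> b <= M ->
  ~ meets_long_gap K (b - a) b M -> right_bridge K a b M.
Proof.
  intros Hsup HM HbM Hno; split.
  - repeat split; [assumption | exists M; split; [assumption | lra] | assumption].
  - intros v' (_ & (k & Hk & Hv'k) & _).
    specialize (Hsup k Hk); lra.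
Qed.

Lemma newhouse_thickness_attained (K : R -> Prop) (t : R) :
  (forall r, local_thickness_value K r -> t <= r) ->
  local_thickness_value K t -> newhouse_thickness K t.
Proof. intros Hlow Ht; split; [exact Hlow | intros m' Hm'; exact (Hm' t Ht)]. Qed.

Section ThreeIntervals.

Variables p0 p1 p2 p3 p4 p5 : R.
Hypothesis Hordered : p0 <= p1 /\ p1 < p2 /\ p2 <= p3 /\ p3 < p4 /\ p4 <= p5.

Definition three_intervals : R -> Prop :=
  union_domain (fun x => p0 <= x <= p1)
    (union_domain (fun x => p2 <= x <= p3) (fun x => p4 <= x <= p5)).

Ltac in_three_intervals :=
  unfold three_intervals, union_domain;
  first [left; lra | right; left; lra | right; right; lra].

Ltac refute Hgap y := exfalso; apply (Hgap y); [lra | in_three_intervals].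

Lemma three_intervals_compact : compact three_intervals.
Proof.
  apply compact_P5.
  - repeat apply closed_set_union; apply closed_set_interval.
  - exists p0, p5; intros x [Hx | [Hx | Hx]]; lra.
Qed.

Lemma three_intervals_bgap_iff (c d : R) :
  is_bgap three_intervals c d <-> (c = p1 /\ d = p2) \/ (c = p3 /\ d = p4).
Proof.
  split.
  - intros (Hcd & Hc & Hd & Hgap).
    (* every other placement of c < d puts a point of K strictly between them *)
    destruct Hc as [Hc | [Hc | Hc]]; destruct Hd as [Hd | [Hd | Hd]];
      try lra; try refute Hgap ((c + d) / 2).
    + destruct (Rlt_or_le c p1); [refute Hgap ((c + p1) / 2) |].
      destruct (Rlt_or_le p2 d); [refute Hgap ((p2 + d) / 2) | lra].
    + refute Hgap p2.
    + destruct (Rlt_or_le c p3); [refute Hgap ((c + p3) / 2) |].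
      destruct (Rlt_or_le p4 d); [refute Hgap ((p4 + d) / 2) | lra].
  - intros [[-> ->] | [-> ->]];
      (split; [lra | split; [in_three_intervals | split; [in_three_intervals |]]]);
      intros x Hx [H | [H | H]]; lra.
Qed.

Lemma three_intervals_not_meets_long_gap (L l r : R) :
  (forall x, p1 < x < p2 -> l <= x <= r -> p2 - p1 <= L) ->
  (forall x, p3 < x < p4 -> l <= x <= r -> p4 - p3 <= L) ->
  ~ meets_long_gap three_intervals L l r.
Proof.
  intros H12 H34 (c & d & Hgap & Hlong & x & Hx & Hlr).
  apply three_intervals_bgap_iff in Hgap as [[-> ->] | [-> ->]].
  - specialize (H12 x Hx Hlr); lra.
  - specialize (H34 x Hx Hlr); lra.
Qed.

Lemma three_intervals_unique_largest_gap :
  p2 - p1 < p4 - p3 -> unique_largest_gap three_intervals p3 p4.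
Proof.
  intros Hlt; split; [apply three_intervals_bgap_iff; right; auto |].
  intros c d Hgap Hne.
  apply three_intervals_bgap_iff in Hgap as [[-> ->] | [-> ->]];
    [lra | contradiction].
Qed.

End ThreeIntervals.

Section Example.

Variable tau : R.
Hypothesis Htau : 1 < tau < 6 / 5.

Let M := 100 + 100 * tau.
Let K := three_intervals (-130) (-15) (-9) 0 100 M.

Let K_ordered : -130 <= -15 /\ -15 < -9 /\ -9 <= 0 /\ 0 < 100 /\ 100 <= M.
Proof. unfold M; lra. Qed.

Ltac in_K :=
  unfold K, three_intervals, union_domain;
  first [left; lra | right; left; lra | right; right; unfold M; lra].

Ltac no_long_gap :=
  apply (three_intervals_not_meets_long_gap _ _ _ _ _ _ K_ordered);
  intros; unfold M in *; lra.

Lemma example_local_thickness_ge (r : R) : local_thickness_value K r -> tau <= r.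
Proof.
  intros (a & b & Hgap & [(v & Hv & ->) | (w & Hw & ->)]);
    apply (three_intervals_bgap_iff _ _ _ _ _ _ K_ordered) in Hgap
      as [[-> ->] | [-> ->]].
  - apply (right_bridge_ratio_ge K (-15) (-9) 0 v); [lra | | lra | exact Hv].
    repeat split; [lra | exists 0; split; [in_K | lra] | no_long_gap].
  - apply (right_bridge_ratio_ge K 0 100 M v); [lra | | unfold M; lra | exact Hv].
    repeat split; [unfold M; lra | exists M; split; [in_K | lra] | no_long_gap].
  - apply (left_bridge_ratio_ge K (-15) (-9) (-130) w); [lra | | lra | exact Hw].
    repeat split; [lra | exists (-130); split; [in_K | lra] | no_long_gap].
  - apply (left_bridge_ratio_ge K 0 100 (-130) w); [lra | | lra | exact Hw].
    repeat split; [lra | exists (-130); split; [in_K | lra] | no_long_gap].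
Qed.

Lemma example_local_thickness_attained : local_thickness_value K tau.
Proof.
  exists 0, 100; split.
  - apply (three_intervals_bgap_iff _ _ _ _ _ _ K_ordered); right; auto.
  - left; exists M; split.
    + apply right_bridge_max; [intros k [Hk | [Hk | Hk]]; unfold M in *; lra
                              | in_K | unfold M; lra | no_long_gap].
    + unfold M; field.
Qed.

Lemma example_no_configuration (x : R) :
  (x = 0 \/ x = 100) -> forall t, 0 < t -> ~ (K (x - t) /\ K x /\ K (x + t ^ 2)).
Proof.
  unfold K, three_intervals, union_domain, M.
  intros [-> | ->] t Ht (Hl & _ & Hr);
    destruct Hl as [Hl | [Hl | Hl]]; destruct Hr as [Hr | [Hr | Hr]]; nra.
Qed.

Theorem example_properties :
  compact K /\ newhouse_thickness K tau /\ unique_largest_gap K 0 100 /\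
  forall x : R, (x = 0 \/ x = 100) ->
    forall t : R, 0 < t -> ~ (K (x - t) /\ K x /\ K (x + t ^ 2)).
Proof.
  split; [exact (three_intervals_compact _ _ _ _ _ _ K_ordered) |].
  split; [exact (newhouse_thickness_attained K tau
                   example_local_thickness_ge example_local_thickness_attained) |].
  split; [apply three_intervals_unique_largest_gap; [exact K_ordered | lra] |].
  exact example_no_configuration.
Qed.

End Example.

Theorem mainTheorem6 :
  exists tau0 : R, 1 < tau0 /\
    forall tau : R, 1 < tau < tau0 ->
      exists (K : R -> Prop) (a b : R),
        compact K /\
        newhouse_thickness K tau /\
        unique_largest_gap K a b /\
        forall x : R, (x = a \/ x = b) ->
          forall t : R, 0 < t -> ~ (K (x - t) /\ K x /\ K (x + t ^ 2)).
Proof.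
  exists (6 / 5); split; [lra |].
  intros tau Htau.
  exists (three_intervals (-130) (-15) (-9) 0 100 (100 + 100 * tau)), 0, 100.
  exact (example_properties tau Htau).
Qed.
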